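(* Let $k\ge1$ and $d\ge0$ be integers. If there is a binary self-orthogonal $[g(k,d+4),k,d+4]$ Griesmer code and $g(k,d+4)>2^k$, then $d_{so}(N,k)=d+2$ for every integer $N$ with $g(k,d+2)+1\le N\le g(k,d+4)-1$.
   Context: $g(k,d)=\sum_{i=0}^{k-1}\lceil d/2^i\rceil$. A binary code is self-orthogonal if $C\subseteq C^\perp$; a binary $[n,k,d]$ code is Griesmer if $n=g(k,d)$. $d_{so}(n,k)$ denotes the largest minimum distance among all binary self-orthogonal $[n,k]$ codes. *)

From HB Require Import structures.
From mathcomp Require Import all_boot all_order all_algebra.
Set Implicit Arguments. Unset Strict Implicit. Unset Printing Implicit Defensive.
Import GRing.Theory.
Local Open Scope ring_scope.

(* Binary linear [n,k] codes are represented by a generator matrix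
   G : 'M['F_2]_(k, n) of full row rank k (row_free G); the code is
   the row space of G. *)

Definition griesmer (k d : nat) : nat :=
  (\sum_(i < k) ((d + 2 ^ i - 1) %/ 2 ^ i))%N.

Definition in_code (k n : nat) (G : 'M['F_2]_(k, n)) (x : 'rV['F_2]_n) : bool :=
  (x <= G)%MS.

Definition wt (n : nat) (x : 'rV['F_2]_n) : nat := #|[set i | x ord0 i != 0%R]|.

(* minimum distance = minimum weight of a nonzero codeword
   (n is returned for the zero code; irrelevant for k >= 1). *)
Definition mindist (k n : nat) (G : 'M['F_2]_(k, n)) : nat :=
  (\big[minn/n]_(x : 'rV['F_2]_n | in_code G x && (x != 0%R)) wt x)%N.

Definition self_orthogonal (k n : nat) (G : 'M['F_2]_(k, n)) : Prop :=
  forall x y : 'rV['F_2]_n, in_code G x -> in_code G y -> (x *m y^T)%R = 0%R.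

Local Close Scope ring_scope.
Definition is_code (k n : nat) (G : 'M['F_2]_(k, n)) : bool := row_free G.

(* d_so(n,k) = d : d is the largest minimum distance among binary
   self-orthogonal [n,k] codes (i.e. attained, and an upper bound). *)
Definition dso_eq (n k d : nat) : Prop :=
  (exists G : 'M['F_2]_(k, n), is_code G /\ self_orthogonal G /\ mindist G = d)
  /\ (forall G : 'M['F_2]_(k, n), is_code G -> self_orthogonal G -> mindist G <= d).

(* Every codeword of a binary self-orthogonal code has even weight, so for
   N < g(k, d+4) (d even) the Griesmer bound caps the minimum distance of a
   self-orthogonal [N, k] code at d + 2.  Conversely, since g(k, d+4) > 2^k the
   given Griesmer code has two equal columns; deleting both keeps the code
   self-orthogonal and lowers every weight by 0 or 2, and zero columns can be
   added freely.  This reaches every N >= g(k, d+4) - 2, which is the whole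
   range: for k >= 2 a self-orthogonal Griesmer code has minimum distance
   divisible by 4 (if D = 2 mod 4, its residual code would beat the Griesmer
   bound), so g(k, d+4) = g(k, d+2) + 3.  The Griesmer bound itself is proved
   by induction on k through residual codes, on supports of codewords. *)

From mathcomp Require Import all_boot all_order all_algebra zify.
Set Implicit Arguments. Unset Strict Implicit. Unset Printing Implicit Defensive.
Import Order.TTheory GRing.Theory.

Lemma griesmer0 d : griesmer 0 d = 0.
Proof. by rewrite /griesmer big_ord0. Qed.

(* ceil (ceil (d / 2) / 2^i) = ceil (d / 2^(i+1)) *)
Lemma griesmerS k d : griesmer k.+1 d = d + griesmer k ((d + 1) %/ 2).
Proof.
rewrite /griesmer big_ord_recl /= expn0 divn1 addnK; congr (_ + _).
apply: eq_bigr => i _; rewrite expnS divnMA; congr (_ %/ _).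
have : 0 < 2 ^ i by rewrite expn_gt0.
move: (2 ^ i) => p p_gt0.
have -> : d + 2 * p - 1 = (d + 1) + (p - 1) * 2 by lia.
by rewrite divnDMl //; lia.
Qed.

Lemma leq_griesmer k d d' : d <= d' -> griesmer k d <= griesmer k d'.
Proof. by move=> le_dd'; apply: leq_sum => i _; apply: leq_div2r; lia. Qed.

Lemma griesmer_ltS k d : 0 < k -> griesmer k d < griesmer k d.+1.
Proof.
case: k => // k _; rewrite !griesmerS.
suff : griesmer k ((d + 1) %/ 2) <= griesmer k ((d.+1 + 1) %/ 2) by lia.
by apply: leq_griesmer; lia.
Qed.

Lemma griesmer1 d : griesmer 1 d = d.
Proof. by rewrite griesmerS griesmer0 addn0. Qed.

Lemma griesmer_gap_mul4 k b :
  1 < k -> griesmer k (4 * b + 4) = griesmer k (4 * b + 2) + 3.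
Proof.
case: k => [|[|k]] // _; rewrite !griesmerS.
have -> : (4 * b + 4 + 1) %/ 2 = 2 * b + 2 by lia.
have -> : (4 * b + 2 + 1) %/ 2 = 2 * b + 1 by lia.
have -> : (2 * b + 2 + 1) %/ 2 = b + 1 by lia.
have -> : (2 * b + 1 + 1) %/ 2 = b + 1 by lia.
lia.
Qed.

Section SymdiffClosedFamilies.
Variable T : finType.
Implicit Types (A B c x y : {set T}) (C : {set {set T}}).

Definition symdiff A B := (A :\: B) :|: (B :\: A).

Definition symdiff_closed C := set0 \in C /\ {in C &, forall A B, symdiff A B \in C}.

Definition residual C c := [set x :\: c | x in C].

Lemma symdiff_eq0 A B : symdiff A B = set0 -> A = B.
Proof.
move/setP=> AB0; apply/setP=> i; move: (AB0 i); rewrite !inE.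
by case: (i \in A); case: (i \in B).
Qed.

Lemma symdiffD A B c : symdiff (A :\: c) (B :\: c) = symdiff A B :\: c.
Proof.
apply/setP=> i; rewrite !inE.
by case: (i \in A); case: (i \in B); case: (i \in c).
Qed.

Lemma card_symdiff A B : #|symdiff A B| = #|A :\: B| + #|B :\: A|.
Proof.
rewrite cardsU; suff -> : (A :\: B) :&: (B :\: A) = set0 by rewrite cards0 subn0.
by apply/setP=> i; rewrite !inE; case: (i \in A); case: (i \in B).
Qed.

Lemma residual_closed C c : symdiff_closed C -> symdiff_closed (residual C c).
Proof.
case=> C0 CD; split; first by apply/imsetP; exists set0; rewrite ?set0D.
move=> _ _ /imsetP[x xC ->] /imsetP[y yC ->]; rewrite symdiffD.
by apply/imsetP; exists (symdiff x y); rewrite ?CD.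
Qed.

Section MinimalMember.
Variables (C : {set {set T}}) (c : {set T}).
Hypotheses (closedC : symdiff_closed C)
  (c_min : {in C, forall x, x != set0 -> #|c| <= #|x|}).

(* For a fixed e \in c, a member x is determined by x :\: c and by whether
   e \in x: two members agreeing on both differ by a member inside c, which by
   minimality of c is either empty or c itself, and the latter contains e. *)
Lemma card_residual : c != set0 -> #|C| <= 2 * #|residual C c|.
Proof.
move=> /set0Pn[e ec]; have [C0 CD] := closedC.
pose f x := (x :\: c, e \in x).
have f_inj : {in C &, injective f}.
  move=> x y xC yC [xyc exy].
  have sub_c : symdiff x y \subset c.
    apply/subsetP=> i; move/setP: xyc => /(_ i); rewrite !inE.
    by case: (i \in x); case: (i \in y); case: (i \in c).
  have [|xy_neq0] := eqVneq (symdiff x y) set0; first exact: symdiff_eq0.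
  have /eqP xy_c : symdiff x y == c.
    by rewrite eqEcard sub_c; apply: c_min xy_neq0; apply: CD.
  by move: ec; rewrite -xy_c !inE exy; case: (e \in y).
rewrite -(card_in_imset f_inj) mulnC -card_bool -cardsT -cardsX.
apply/subset_leq_card/subsetP=> _ /imsetP[x xC ->].
by rewrite /f in_setX in_setT andbT; apply: imset_f.
Qed.

(* Both x and (symdiff x c) are nonzero members, hence at least as large as c;
   adding the two inequalities gives #|c| <= 2 * #|x :\: c|. *)
Lemma residual_weight :
  c \in C -> {in residual C c, forall y, y != set0 -> #|c| <= 2 * #|y|}.
Proof.
move=> cC _ /imsetP[x xC ->] xc_neq0; have [C0 CD] := closedC.
have x_neq0 : x != set0 by apply: contraNneq xc_neq0 => ->; rewrite set0D.
have xc_sym_neq0 : symdiff x c != set0.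
  by apply: contraNneq xc_neq0 => /symdiff_eq0 ->; rewrite setDv.
have := c_min xC x_neq0; have := c_min (CD _ _ xC cC) xc_sym_neq0.
rewrite card_symdiff; have := cardsID c x; have := cardsID x c.
rewrite setIC; lia.
Qed.

End MinimalMember.

Lemma exists_minimal_member C : 1 < #|C| ->
  exists c, [/\ c \in C, c != set0 & {in C, forall x, x != set0 -> #|c| <= #|x|}].
Proof.
move=> C_gt1; have /card_gt0P[x0 x0C] : 0 < #|C :\ set0|.
  move: C_gt1; rewrite (cardsD1 set0 C).
  by case: (_ \in _); rewrite ?add1n ?add0n // => /ltnW.
case: (@arg_minnP _ x0 [in C :\ set0] (fun x => #|x|) x0C) => c.
rewrite !inE => /andP[c_neq0 cC] c_min.
by exists c; split=> // x xC x_neq0; apply: c_min; rewrite !inE x_neq0.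
Qed.

(* The Griesmer bound, for the supports of the codewords of a binary linear code. *)
Theorem griesmer_family k C A D : symdiff_closed C -> 2 ^ k <= #|C| ->
  {in C, forall x, x \subset A} -> {in C, forall x, x != set0 -> D <= #|x|} ->
  griesmer k D <= #|A|.
Proof.
elim: k C A D => [|k IHk] C A D closedC cardC subA wtC; first by rewrite griesmer0.
have [|c [cC c_neq0 c_min]] := exists_minimal_member (C := C).
  by apply: leq_trans cardC; rewrite expnS leq_pmulr ?expn_gt0.
have cA := subA _ cC.
have cardR : 2 ^ k <= #|residual C c|.
  rewrite -(leq_pmul2l (isT : 0 < 2)) -expnS (leq_trans cardC) //.
  exact: card_residual closedC c_min c_neq0.
have subR : {in residual C c, forall y, y \subset A :\: c}.
  by move=> _ /imsetP[x xC ->]; apply/setSD/subA.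
have wtR : {in residual C c, forall y, y != set0 -> (#|c| + 1) %/ 2 <= #|y|}.
  by move=> y yR y_neq0; have := residual_weight closedC c_min cC yR y_neq0; lia.
have := IHk _ _ _ (residual_closed c closedC) cardR subR wtR.
rewrite cardsD (setIidPr cA) -(leq_add2l #|c|) subnKC ?subset_leq_card // -griesmerS.
exact/leq_trans/leq_griesmer/wtC.
Qed.

End SymdiffClosedFamilies.

Lemma F2_0or1 (a : 'F_2) : a = 0%R \/ a = 1%R.
Proof. by case: a => [[|[|]]] //= ?; [left | right]; exact/val_inj. Qed.

Lemma natr_F2 m : (m%:R : 'F_2)%R = (odd m)%:R%R.
Proof. by elim: m => // m IHm; rewrite -natr1 IHm /=; case: (odd m); apply: val_inj. Qed.

Section BinaryVectors.
Variable n : nat.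
Implicit Types x y : 'rV['F_2]_n.

Definition supp x : {set 'I_n} := [set i | x ord0 i != 0%R].

Lemma wtE x : wt x = #|supp x|.
Proof. by []. Qed.

Lemma wt_le_len x : wt x <= n.
Proof. by rewrite wtE -[X in _ <= X]card_ord max_card. Qed.

Lemma supp_inj : injective supp.
Proof.
move=> x y /setP xy; apply/rowP=> i; move: (xy i); rewrite !inE.
by case: (F2_0or1 (x ord0 i)) => ->; case: (F2_0or1 (y ord0 i)) => ->.
Qed.

Lemma supp0 : supp 0 = set0.
Proof. by apply/setP=> i; rewrite !inE mxE eqxx. Qed.

Lemma suppD x y : supp (x + y)%R = symdiff (supp x) (supp y).
Proof.
apply/setP=> i; rewrite !inE mxE.
by case: (F2_0or1 (x ord0 i)) => ->; case: (F2_0or1 (y ord0 i)) => ->.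
Qed.

Lemma dot_supp x y : (x *m y^T)%R = (odd #|supp x :&: supp y|)%:R%:M%R.
Proof.
rewrite [LHS]mx11_scalar -natr_F2 -sum1_card natr_sum; congr (_%:M)%R.
rewrite !mxE [RHS]big_mkcond; apply: eq_bigr => i _; rewrite !inE !mxE.
by case: (F2_0or1 (x ord0 i)) => ->; case: (F2_0or1 (y ord0 i)) => ->;
  rewrite ?mulr0 ?mul0r ?mulr1.
Qed.

Lemma orthogonal_even x y : (x *m y^T)%R = 0%R -> ~~ odd #|supp x :&: supp y|.
Proof. by rewrite dot_supp; case: odd => // /matrixP/(_ ord0 ord0); rewrite !mxE. Qed.

End BinaryVectors.

Section BinaryCodes.
Variables k n : nat.
Implicit Types (G : 'M['F_2]_(k, n)) (x y : 'rV['F_2]_n).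

Definition codewords G := [set x | in_code G x].

Definition supp_family G := [set supp x | x in codewords G].

Lemma in_codeP G x : reflect (exists u : 'rV_k, x = (u *m G)%R) (in_code G x).
Proof. exact: submxP. Qed.

Lemma card_codewords G : row_free G -> #|codewords G| = 2 ^ k.
Proof.
move=> Gfree; have -> : codewords G = [set (u *m G)%R | u : 'rV_k].
  by apply/setP=> x; rewrite inE; apply/in_codeP/imsetP=> [[u ->]|[u _ ->]]; exists u.
by rewrite card_imset ?card_mx ?card_Fp ?mul1n //; apply: row_free_inj.
Qed.

Lemma supp_family_closed G : symdiff_closed (supp_family G).
Proof.
split; first by apply/imsetP; exists 0%R; rewrite ?supp0 // inE /in_code sub0mx.
move=> _ _ /imsetP[x + ->] /imsetP[y + ->]; rewrite !inE => xG yG.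
by rewrite -suppD; apply/imset_f; rewrite inE /in_code addmx_sub.
Qed.

Lemma card_supp_family G : row_free G -> #|supp_family G| = 2 ^ k.
Proof.
by move=> Gfree; rewrite card_in_imset ?card_codewords // => x y _ _ /supp_inj.
Qed.

Lemma mindist_le_wt G x : in_code G x -> x != 0%R -> mindist G <= wt x.
Proof.
by move=> xG x_neq0; rewrite /mindist -minEnat -leEnat; apply: bigmin_le_cond; rewrite xG.
Qed.

Lemma mindist_le_len G : mindist G <= n.
Proof. by rewrite /mindist -minEnat -leEnat bigmin_le_id. Qed.

Lemma leq_mindist G m : m <= n ->
  (forall x, in_code G x -> x != 0%R -> m <= wt x) -> m <= mindist G.
Proof.
move=> le_mn wtG; rewrite /mindist -minEnat -leEnat le_bigmin // => x /andP[].
exact: wtG.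
Qed.

Lemma mindist_attained G : 0 < k -> row_free G ->
  exists x, [/\ in_code G x, x != 0%R & wt x = mindist G].
Proof.
move=> k_gt0 Gfree; pose i0 := Ordinal k_gt0.
have rowG : in_code G (row i0 G) by apply: row_sub.
have row_neq0 : row i0 G != 0%R.
  rewrite rowE mulmx_free_eq0 //; apply/eqP => /rowP/(_ i0).
  by rewrite !mxE eqxx => /eqP; rewrite oner_eq0.
rewrite /mindist -minEnat.
have [x /andP[xG x_neq0] ->] := @eq_bigmin _ _ _ n (row i0 G)
  (fun x => in_code G x && (x != 0%R)) (@wt n) (introT andP (conj rowG row_neq0))
  (fun x _ => wt_le_len x).
by exists x.
Qed.

Lemma supp_family_weight G :
  {in supp_family G, forall s, s != set0 -> mindist G <= #|s|}.
Proof.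
move=> _ /imsetP[x + ->]; rewrite inE => xG s_neq0; apply: mindist_le_wt => //.
by apply: contraNneq s_neq0 => ->; rewrite supp0.
Qed.

Theorem griesmer_bound G : row_free G -> griesmer k (mindist G) <= n.
Proof.
move=> Gfree; rewrite -[X in _ <= X]card_ord -cardsT.
apply: (griesmer_family (supp_family_closed G)) => [|s _|].
- by rewrite card_supp_family.
- exact: subsetT.
- exact: supp_family_weight.
Qed.

Lemma so_wt_even G x : self_orthogonal G -> in_code G x -> ~~ odd (wt x).
Proof. by move=> Gso xG; have := orthogonal_even (Gso _ _ xG xG); rewrite setIid. Qed.

Lemma so_mindist_even G :
  0 < k -> row_free G -> self_orthogonal G -> ~~ odd (mindist G).
Proof.
move=> k_gt0 Gfree Gso; have [x [xG _ <-]] := mindist_attained k_gt0 Gfree.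
exact: so_wt_even Gso xG.
Qed.

(* Minimum distances of self-orthogonal codes are even, so exceeding the even
   number D means reaching D + 2, which the Griesmer bound forbids. *)
Lemma so_mindist_le G D : 0 < k -> row_free G -> self_orthogonal G ->
  n < griesmer k (D + 2) -> ~~ odd D -> mindist G <= D.
Proof.
move=> k_gt0 Gfree Gso short D_even; rewrite leqNgt; apply/negP => lt_D.
have : D + 2 <= mindist G.
  have := so_mindist_even k_gt0 Gfree Gso; move: D_even lt_D.
  by rewrite -!dvdn2; lia.
move/(leq_griesmer k)/leq_trans/(_ (griesmer_bound Gfree)); lia.
Qed.

End BinaryCodes.

Lemma residual_supp_even k n (G : 'M['F_2]_(k, n)) x c :
  self_orthogonal G -> in_code G x -> in_code G c -> ~~ odd #|supp x :\: supp c|.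
Proof.
move=> Gso xG cG; have := so_wt_even Gso xG; have := orthogonal_even (Gso _ _ xG cG).
by rewrite wtE -(cardsID (supp c) (supp x)) oddD => /negbTE->.
Qed.

(* If D = 2 (mod 4), the nonzero residual supports have even size at least
   D/2, an odd number, so size at least D/2 + 1: one more than a Griesmer code
   can afford. *)
Lemma so_griesmer_mindist_mod4 k n (G : 'M['F_2]_(k, n)) :
  1 < k -> row_free G -> self_orthogonal G -> n = griesmer k (mindist G) ->
  4 %| mindist G.
Proof.
case: k G => [|[|k]] // G _ Gfree Gso Gn.
have D_even := so_mindist_even (isT : 0 < k.+2) Gfree Gso.
have [x0 [x0G x0_neq0 wt_x0]] := mindist_attained (isT : 0 < k.+2) Gfree.
set D := mindist G in Gn D_even wt_x0 *; set F := supp_family G; set c := supp x0.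
have closedF : symdiff_closed F := supp_family_closed G.
have cF : c \in F by apply: imset_f; rewrite inE.
have c_neq0 : c != set0.
  by apply: contraNneq x0_neq0; rewrite /c -(supp0 n) => /supp_inj ->.
have c_min : {in F, forall s, s != set0 -> #|c| <= #|s|}.
  rewrite /c -wtE wt_x0; exact: supp_family_weight.
apply: contraT => D_not4.
have wtR : {in residual F c, forall y, y != set0 -> D %/ 2 + 1 <= #|y|}.
  move=> y yR y_neq0; have := residual_weight closedF c_min cF yR y_neq0.
  have : ~~ odd #|y|.
    case/imsetP: yR => _ /imsetP[x + ->] ->; rewrite inE => xG.
    exact: residual_supp_even Gso xG x0G.
  move: D_even D_not4; rewrite /c -wtE wt_x0 -!dvdn2; lia.
have cardR : 2 ^ k.+1 <= #|residual F c|.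
  rewrite -(leq_pmul2l (isT : 0 < 2)) -expnS -(card_supp_family Gfree).
  exact: card_residual closedF c_min c_neq0.
have subR : {in residual F c, forall y : {set 'I_n}, y \subset ~: c}.
  by move=> _ /imsetP[s _ ->]; rewrite setDE subsetIr.
have := griesmer_family (residual_closed c closedF) cardR subR wtR; rewrite addn1.
have := griesmer_ltS (D %/ 2) (isT : 0 < k.+1).
have := cardsC c; rewrite card_ord /c -wtE wt_x0.
have half : (D + 1) %/ 2 = D %/ 2 by move: D_even; rewrite -dvdn2; lia.
by move: Gn; rewrite griesmerS half; lia.
Qed.

Lemma so_griesmer_gap k d (G : 'M['F_2]_(k, griesmer k (d + 4))) :
  0 < k -> row_free G -> self_orthogonal G -> mindist G = d + 4 ->
  griesmer k (d + 4) <= griesmer k (d + 2) + 3.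
Proof.
move=> k_gt0 Gfree Gso Gd; have [k_gt1|k_le1] := ltnP 1 k; last first.
  have -> : k = 1 by lia.
  by rewrite !griesmer1; lia.
have := so_griesmer_mindist_mod4 k_gt1 Gfree Gso; rewrite Gd => /(_ erefl) dvd4.
have -> : d + 4 = 4 * (d %/ 4) + 4 by lia.
have -> : d + 2 = 4 * (d %/ 4) + 2 by lia.
by rewrite griesmer_gap_mul4.
Qed.

Lemma equal_columns k n (G : 'M['F_2]_(k, n)) : 2 ^ k < n ->
  exists j1 j2 : 'I_n, j1 != j2 /\ col j1 G = col j2 G.
Proof.
move=> lt_2k_n; have : ~~ injectiveb (fun j => col j G).
  apply/negP => /injectiveP/leq_card; rewrite card_ord card_mx card_Fp // muln1; lia.
by case/injectivePn => j1 [j2 j12 colG]; exists j1, j2.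
Qed.

Section ColumnEmbedding.
Variables (n N : nat) (K : {set 'I_n}).

(* Column j of the new matrix is the j-th column in K (in enumeration order)
   when j < #|K|, and zero otherwise. *)
Definition embed_col (j : 'I_N) : option 'I_n :=
  omap enum_val (insub (val j) : option 'I_#|K|).

Definition embed_mx m (M : 'M['F_2]_(m, n)) : 'M['F_2]_(m, N) :=
  \matrix_(i, j) oapp (M i) 0%R (embed_col j).

Lemma mul_embed_mx p m (A : 'M['F_2]_(p, m)) (M : 'M_(m, n)) :
  (A *m embed_mx M)%R = embed_mx (A *m M)%R.
Proof.
apply/matrixP=> i j; rewrite !mxE; under eq_bigr => l _ do rewrite mxE.
case: (embed_col j) => [a|] /=; first by rewrite mxE.
by rewrite big1 // => l _; rewrite mulr0.
Qed.

Lemma supp_embed_mx (x : 'rV['F_2]_n) :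
  supp (embed_mx x) = embed_col @^-1: (Some @: supp x).
Proof.
apply/setP=> j; rewrite !inE mxE; case: (embed_col j) => [a|] /=.
  by rewrite mem_imset ?inE //; apply: Some_inj.
by apply/esym/negbTE/imsetP => -[].
Qed.

Hypothesis leKN : #|K| <= N.

Lemma card_embed_col_preim (A : {set 'I_n}) : #|embed_col @^-1: (Some @: A)| = #|A :&: K|.
Proof.
have widen_inj : injective (widen_ord leKN) by move=> i i' [] /ord_inj.
have -> : embed_col @^-1: (Some @: A) = widen_ord leKN @: [set i | enum_val i \in A].
  apply/setP=> j; rewrite inE /embed_col; case: insubP => [i _ ij|j_ge] /=.
    have -> : j = widen_ord leKN i by apply: val_inj.
    by rewrite (mem_imset _ _ Some_inj) (mem_imset _ _ widen_inj) inE.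
  apply/idP/imsetP => [/imsetP[? _] //|[i _ ji]].
  by move: j_ge; rewrite ji /= ltn_ord.
rewrite card_imset // -(card_imset _ enum_val_inj); apply: eq_card => a.
rewrite inE; apply/imsetP/andP => [[i + ->]|[aA aK]].
  by rewrite inE => ?; split; last exact: enum_valP.
by exists (enum_rank_in aK a); rewrite ?inE enum_rankK_in.
Qed.

Lemma wt_embed_mx (x : 'rV['F_2]_n) : wt (embed_mx x) = #|supp x :&: K|.
Proof. by rewrite wtE supp_embed_mx card_embed_col_preim. Qed.

Lemma card_supp_embed_mxI (x y : 'rV['F_2]_n) :
  #|supp (embed_mx x) :&: supp (embed_mx y)| = #|supp x :&: supp y :&: K|.
Proof.
rewrite !supp_embed_mx -preimsetI -imsetI ?card_embed_col_preim //.
by move=> a b _ _ [].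
Qed.

End ColumnEmbedding.

Lemma card_pair_split (T : finType) (a b : T) (S : {set T}) : a != b ->
  (a \in S) = (b \in S) -> #|S| = (a \in S).*2 + #|S :&: ~: [set a; b]|.
Proof.
move=> ab Sab; rewrite -setDE -(cardsID [set a; b] S); congr (_ + _).
case aS: (a \in S).
  by rewrite (setIidPr _) ?cards2 ?ab // subUset !sub1set aS -Sab aS.
apply/eqP; rewrite cards_eq0; apply/eqP/setP=> i; rewrite !inE.
have [->|_] := eqVneq i a; first by rewrite aS.
by have [->|_] := eqVneq i b; rewrite -?Sab ?aS ?andbF.
Qed.

Section PunctureEqualColumns.
Variables (k n N : nat) (G : 'M['F_2]_(k, n)) (j1 j2 : 'I_n).
Hypotheses (j12 : j1 != j2) (colG : col j1 G = col j2 G).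

Local Notation K := (~: [set j1; j2]).
Local Notation punct := (embed_mx N K).

Lemma codeword_cols_eq x : in_code G x -> x ord0 j1 = x ord0 j2.
Proof.
case/in_codeP => u ->; rewrite !mxE; apply: eq_bigr => i _.
by move/colP: colG => /(_ i); rewrite !mxE => ->.
Qed.

Hypothesis leN : n - 2 <= N.

Lemma card_K : #|K| <= N.
Proof. by have := cardsC [set j1; j2]; rewrite cards2 j12 card_ord; lia. Qed.

Lemma wt_punct x : in_code G x -> wt x = (x ord0 j1 != 0%R).*2 + wt (punct x).
Proof.
move=> xG; rewrite wt_embed_mx ?card_K // wtE (card_pair_split j12) ?inE //.
by rewrite (codeword_cols_eq xG).
Qed.

Lemma dot_punct x y : in_code G x -> in_code G y ->
  (punct x *m (punct y)^T)%R = (x *m y^T)%R.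
Proof.
move=> xG yG; rewrite !dot_supp card_supp_embed_mxI ?card_K //.
rewrite [in RHS](card_pair_split j12) ?oddD ?odd_double //.
by rewrite !inE (codeword_cols_eq xG) (codeword_cols_eq yG).
Qed.

Lemma in_code_punct y : in_code (punct G) y -> exists2 x, in_code G x & y = punct x.
Proof.
case/in_codeP => u ->; exists (u *m G)%R; last exact: mul_embed_mx.
by apply/in_codeP; exists u.
Qed.

Lemma punct_so : self_orthogonal G -> self_orthogonal (punct G).
Proof.
move=> Gso _ _ /in_code_punct[x xG ->] /in_code_punct[y yG ->].
by rewrite dot_punct // Gso.
Qed.

Lemma punct_mindist : mindist G - 2 <= mindist (punct G).
Proof.
apply: leq_mindist => [|_ /in_code_punct[x xG ->] px_neq0].
  by have := mindist_le_len G; lia.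
have x_neq0 : x != 0%R.
  apply: contraNneq px_neq0 => ->; apply/eqP/matrixP=> i j.
  by rewrite !mxE; case: embed_col => //= a; rewrite mxE.
by have := mindist_le_wt xG x_neq0; rewrite (wt_punct xG); case: (_ != _) => /=; lia.
Qed.

Lemma punct_row_free : row_free G -> 2 < mindist G -> row_free (punct G).
Proof.
move=> Gfree dist_gt2; apply: inj_row_free => u; rewrite mul_embed_mx => uG0.
have uG : in_code G (u *m G)%R by apply/in_codeP; exists u.
have [/eqP|uG_neq0] := eqVneq (u *m G)%R 0%R; first by rewrite mulmx_free_eq0 // => /eqP.
have := mindist_le_wt uG uG_neq0; rewrite (wt_punct uG) uG0.
have -> : wt (0 : 'rV['F_2]_N)%R = 0 by rewrite wtE supp0 cards0.
by case: (_ != _) => /=; lia.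
Qed.

End PunctureEqualColumns.

Lemma exists_punctured_code k n N (G : 'M['F_2]_(k, n)) :
  2 ^ k < n -> row_free G -> self_orthogonal G -> 2 < mindist G -> n - 2 <= N ->
  exists G' : 'M['F_2]_(k, N),
    [/\ row_free G', self_orthogonal G' & mindist G - 2 <= mindist G'].
Proof.
move=> lt_2k_n Gfree Gso dist_gt2 leN.
have [j1 [j2 [j12 colG]]] := equal_columns G lt_2k_n.
exists (embed_mx N (~: [set j1; j2]) G); split.
- exact: punct_row_free.
- exact: punct_so.
- exact: punct_mindist.
Qed.

Theorem lemma5p5 (k d : nat) (hk : 1 <= k) :
  (exists G : 'M['F_2]_(k, griesmer k (d + 4)),
      is_code G /\ self_orthogonal G /\ mindist G = d + 4) ->
  2 ^ k < griesmer k (d + 4) ->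
  forall N : nat, griesmer k (d + 2) + 1 <= N <= griesmer k (d + 4) - 1 ->
    dso_eq N k (d + 2).
Proof.
move=> [G [Gfree [Gso Gd]]] lt_2k_n N /andP[ge_N le_N].
have d_even : ~~ odd d by have := so_mindist_even hk Gfree Gso; rewrite Gd oddD /= addbF.
have gap := so_griesmer_gap hk Gfree Gso Gd.
have so_le : forall G' : 'M['F_2]_(k, N),
    is_code G' -> self_orthogonal G' -> mindist G' <= d + 2.
  move=> G' G'free G'so; apply: so_mindist_le => //; last by rewrite oddD /= addbF.
  have -> : d + 2 + 2 = d + 4 by lia.
  lia.
split=> //.
have dist_gt2 : 2 < mindist G by rewrite Gd; lia.
have le_n2_N : griesmer k (d + 4) - 2 <= N by lia.
have [G' [G'free G'so G'dist]] :=
  exists_punctured_code lt_2k_n Gfree Gso dist_gt2 le_n2_N.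
exists G'; do 2!split=> //.
by apply/eqP; rewrite eqn_leq so_le //=; rewrite Gd in G'dist; lia.
Qed.
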